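(* Let $N_1,N_2$ be free abelian groups of rank $n$ and $\Sigma_1\subset(N_1)_{\mathbf R}$, $\Sigma_2\subset(N_2)_{\mathbf R}$ amply equivalent complete fans with bijection $\Psi:\Sigma_1(1)\to\Sigma_2(1)$ preserving primitive collections and relations among ray generators. Then there is a $\mathbf Q$-linear isomorphism $\Phi:(N_1)_{\mathbf Q}\to(N_2)_{\mathbf Q}$ such that (1) $\Phi(u_\rho)=u_{\Psi(\rho)}$ for all $\rho\in\Sigma_1(1)$; (2) if $\Phi_{\mathbf R}$ is its $\mathbf R$-linear extension, a cone $\sigma_1\subset(N_1)_{\mathbf R}$ is a cone of $\Sigma_1$ if and only if $\Phi_{\mathbf R}(\sigma_1)$ is a cone of $\Sigma_2$. Moreover, (3) $\Phi$ induces an isomorphism $\Gamma(G_1)_{\mathbf Q}\cong\Gamma(G_2)_{\mathbf Q}$, namely the unique map $\varphi$ making the diagram with exact rows $0\to\Gamma(G_i)_{\mathbf Q}\to\mathbf Q^{\Sigma(1)}\to(N_i)_{\mathbf Q}\to0$ ($i=1,2$), identity in the middle and $\Phi$ on the right, commute.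
   Context: For a fan $\Sigma$: rays $\Sigma(1)$, primitive generators $u_\rho$. A primitive collection is $C\subset\Sigma(1)$ not contained in $\sigma(1)$ for any cone $\sigma$ while every proper subset is. Complete fans $\Sigma_1\subset(N_1)_{\mathbf R},\Sigma_2\subset(N_2)_{\mathbf R}$ (equal ranks) are amply equivalent via a bijection $\Psi:\Sigma_1(1)\to\Sigma_2(1)$ if $C$ is a primitive collection of $\Sigma_1$ iff $\Psi(C)$ is one of $\Sigma_2$, and for all integers $(a_\rho)_{\rho\in\Sigma_1(1)}$, $\sum a_\rho u_\rho=0\iff\sum a_\rho u_{\Psi(\rho)}=0$. $G_i=\mathrm{Hom}(\mathrm{Cl}(X_{\Sigma_i}),\mathbf C^\times)$, and $\Gamma(G_i)=\{b\in\mathbf Z^{\Sigma_i(1)}:\sum b_\rho u_\rho=0\}$ is its group of one-parameter subgroups. $\mathbf Q^{\Sigma(1)}$ denotes $\mathbf Q^{\Sigma_1(1)}$ identified with $\mathbf Q^{\Sigma_2(1)}$ via $\Psi$, with maps $e_\rho\mapsto u_\rho$ onto $(N_1)_{\mathbf Q}$ and $e_\rho\mapsto u_{\Psi(\rho)}$ onto $(N_2)_{\mathbf Q}$. *)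

From mathcomp Require Import all_boot all_order all_algebra.
From mathcomp Require Import classical_sets reals.
Set Implicit Arguments. Unset Strict Implicit. Unset Printing Implicit Defensive.
Import Order.TTheory GRing.Theory Num.Theory.
Local Open Scope ring_scope.

(* The lattice N is modelled as Z^n = 'rV[int]_n; a fan is given by a finite
   index type I of rays, their primitive generators u : I -> 'rV[int]_n and
   the set of its cones, each cone being recorded by its set of rays. *)

Definition intv (K : nzRingType) n (v : 'rV[int]_n) : 'rV[K]_n :=
  map_mx (fun z : int => z%:~R) v.

Definition coneR (R : realType) n (I : finType) (u : I -> 'rV[int]_n)
  (S : {set I}) : set 'rV[R]_n :=
  (fun x => exists a : I -> R, (forall i, 0 <= a i) /\
     (forall i, i \notin S -> a i = 0) /\ x = \sum_i a i *: intv R (u i)).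

Arguments coneR R {n I} u S _.

Definition dotR (R : realType) n (x m : 'rV[R]_n) : R := (x *m m^T) 0 0.

Definition is_face (R : realType) n (s F : set 'rV[R]_n) : Prop :=
  exists m : 'rV[R]_n, (forall x, s x -> 0 <= dotR x m) /\
    F = setI s (fun x => dotR x m = 0).

Definition strongly_convex (R : realType) n (s : set 'rV[R]_n) : Prop :=
  forall x, s x -> s (- x) -> x = 0.

Definition primitive_vec n (v : 'rV[int]_n) : Prop :=
  v != 0 /\ forall (k : int) (w : 'rV[int]_n), v = k *: w -> `|k| = 1.

(** (u, cones) is a complete fan in R^n whose set of rays is indexed by I,
    with u i the primitive generator of the ray i, and every cone is
    Cone(u_i : i in S) for S in cones, S being exactly its set of rays. *)
Definition is_complete_fan (R : realType) n (I : finType)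
  (u : I -> 'rV[int]_n) (cones : {set {set I}}) : Prop :=
  injective u /\
  (forall i, primitive_vec (u i)) /\
  (forall i, [set i] \in cones) /\
  (forall S, S \in cones -> forall i, i \in S <-> coneR R u S (intv R (u i))) /\
  (forall S, S \in cones -> strongly_convex (coneR R u S)) /\
  (forall S F, S \in cones -> is_face (coneR R u S) F ->
      exists2 T, T \in cones & F = coneR R u T) /\
  (forall S T, S \in cones -> T \in cones ->
      is_face (coneR R u S) (setI (coneR R u S) (coneR R u T)) /\
      is_face (coneR R u T) (setI (coneR R u S) (coneR R u T))) /\
  (forall x : 'rV[R]_n, exists2 S, S \in cones & coneR R u S x).

Arguments is_complete_fan R {n I} u cones.

Definition cone_of (R : realType) n (I : finType) (u : I -> 'rV[int]_n)
  (cones : {set {set I}}) (C : set 'rV[R]_n) : Prop :=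
  exists2 S, S \in cones & C = coneR R u S.

Definition primitive_collection (I : finType) (cones : {set {set I}})
  (C : {set I}) : Prop :=
  (forall S, S \in cones -> ~~ (C \subset S)) /\
  (forall C' : {set I}, C' \proper C -> exists2 S, S \in cones & C' \subset S).

(* The generators u_rho span N_Q because the fans are complete, and the two
   families of generators satisfy the same integral, hence the same rational,
   linear relations; so u_rho |-> u_Psi(rho) extends to a linear isomorphism
   Phi.  A set of rays lies in a cone exactly when it contains no primitive
   collection, so Psi preserves the property of lying in a cone, and therefore
   maps every maximal cone of Sigma_1 onto a cone of Sigma_2.  Every cone of
   Sigma_1 is a face of a maximal one and Phi_R maps faces to faces, so Phi_R
   maps cones of Sigma_1 to cones of Sigma_2; the converse follows by symmetry
   with Phi^-1. *)

From mathcomp Require Import all_boot all_order all_algebra.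
From mathcomp Require Import classical_sets reals.
Import Order.TTheory GRing.Theory Num.Theory.
Set Implicit Arguments. Unset Strict Implicit.
Local Open Scope classical_set_scope.
Local Open Scope ring_scope.

Definition contained_in_cone (I : finType) (cones : {set {set I}}) (A : {set I}) :=
  [exists S in cones, A \subset S].

Lemma contained_in_coneP (I : finType) (cones : {set {set I}}) (A : {set I}) :
  reflect (forall C, primitive_collection cones C -> ~~ (C \subset A))
          (contained_in_cone cones A).
Proof.
apply: (iffP exists_inP) => [[S S_cone AS] C [C_not_cone _]|noC].
  apply: contraNN (C_not_cone S S_cone) => CA.
  exact: fintype.subset_trans CA AS.
apply/exists_inP; apply: contraTT isT => noS.
pose P := [pred B : {set I} | ~~ contained_in_cone cones B].
have [|C /minsetP[PC Cmin] CA] := @minset_exists _ P A; first exact: noS.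
suff primC : primitive_collection cones C by rewrite (negbTE (noC C primC)) in CA.
split=> [S S_cone|B BC].
  by apply: contraNN PC => CS; apply/exists_inP; exists S.
apply/exists_inP; apply: contraT => PB.
have eqBC := Cmin B PB (proper_sub BC).
by rewrite eqBC properE subxx in BC.
Qed.

Lemma imsetK (aT rT : finType) (f : aT -> rT) (g : rT -> aT) (A : {set aT}) :
  cancel f g -> g @: (f @: A) = A.
Proof. by move=> fK; rewrite -imset_comp (eq_imset _ fK) imset_id. Qed.

Lemma contained_in_cone_imset (I1 I2 : finType) (cones1 : {set {set I1}})
    (cones2 : {set {set I2}}) (f : I1 -> I2) (g : I2 -> I1) :
  cancel f g -> cancel g f ->
  (forall C, primitive_collection cones1 C <-> primitive_collection cones2 (f @: C)) ->
  forall A, contained_in_cone cones1 A = contained_in_cone cones2 (f @: A).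
Proof.
move=> fK gK primE A.
apply/contained_in_coneP/contained_in_coneP => noC C primC.
  have primgC : primitive_collection cones1 (g @: C) by apply/primE; rewrite imsetK.
  by apply: contraNN (noC _ primgC) => /(imsetS g); rewrite imsetK.
by apply: contraNN (noC _ (proj1 (primE C) primC)); apply: imsetS.
Qed.

Section CompleteFan.
Variables (R : realType) (n : nat) (I : finType) (u : I -> 'rV[int]_n).
Variable cones : {set {set I}}.

Lemma subset_coneR (S M : {set I}) :
  S \subset M -> coneR R u S `<=` coneR R u M.
Proof.
move=> SM x [a [a_ge0 [a_out ->]]]; exists a; split=> //; split=> // i iNM.
by apply: a_out; apply: contraNN iNM; apply: (fintype.subsetP SM).
Qed.

Hypothesis fan : is_complete_fan R u cones.

Lemma complete_fan_face S F :
  S \in cones -> is_face (coneR R u S) F -> cone_of u cones F.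
Proof. by case: fan => _ [_ [_ [_ [_ [face_cone _]]]]]; apply: face_cone. Qed.

Lemma complete_fan_face_subset S M :
  S \in cones -> M \in cones -> S \subset M -> is_face (coneR R u M) (coneR R u S).
Proof.
case: fan => _ [_ [_ [_ [_ [_ [meet_face _]]]]]] S_cone M_cone SM.
by have [_] := meet_face S M S_cone M_cone; rewrite setIidl //; apply: subset_coneR.
Qed.

Lemma complete_fan_span (x : 'rV[R]_n) :
  exists a : I -> R, x = \sum_i a i *: intv R (u i).
Proof.
case: fan => _ [_ [_ [_ [_ [_ [_ cover]]]]]].
by have [S _ [a [_ [_ ->]]]] := cover x; exists a.
Qed.

End CompleteFan.

Lemma coneR_mulmx (R : realType) n (I : finType) (u w : I -> 'rV[int]_n)
    (P : 'M[R]_n) (S : {set I}) :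
  (forall i, intv R (u i) *m P = intv R (w i)) ->
  (fun x => x *m P) @` coneR R u S = coneR R w S.
Proof.
move=> uP; have combP a : (\sum_i a i *: intv R (u i)) *m P = \sum_i a i *: intv R (w i).
  by rewrite mulmx_suml; apply: eq_bigr => i _; rewrite -scalemxAl uP.
apply/seteqP; split=> x => [[y [a [a_ge0 [a_out ->]]] <-]|[a [a_ge0 [a_out ->]]]].
  by exists a; rewrite combP.
by exists (\sum_i a i *: intv R (u i)); [exists a|].
Qed.

Lemma coneR_imset (R : realType) n (I1 I2 : finType) (u : I2 -> 'rV[int]_n)
    (f : I1 -> I2) (g : I2 -> I1) (S : {set I1}) :
  cancel f g -> cancel g f -> coneR R (u \o f) S = coneR R u (f @: S).
Proof.
move=> fK gK; have f_bij : {on [pred j | true], bijective f} by apply: onW_bij; exists g.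
apply/seteqP; split=> x [a [a_ge0 [a_out ->]]].
  exists (a \o g); split=> [j|]; first exact: a_ge0.
  split; last by rewrite (reindex f f_bij); apply: eq_bigr => i _ /=; rewrite fK.
  by move=> j jNS; apply: a_out; apply: contraNN jNS => /(imset_f f); rewrite gK.
exists (a \o f); split=> [i|]; first exact: a_ge0.
split; last by rewrite (reindex f f_bij).
by move=> i iNS; apply: a_out; rewrite (can2_imset_pre _ fK gK) inE fK.
Qed.

Lemma dotR_mulmx (R : realType) n (P : 'M[R]_n) (x m : 'rV[R]_n) :
  P \in unitmx -> dotR (x *m P) (m *m (invmx P)^T) = dotR x m.
Proof. by move=> P_unit; rewrite /dotR trmx_mul trmxK mulmxA mulmxK. Qed.

Lemma is_face_mulmx (R : realType) n (P : 'M[R]_n) (s F : set 'rV[R]_n) :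
  P \in unitmx -> is_face s F ->
  is_face ((fun x => x *m P) @` s) ((fun x => x *m P) @` F).
Proof.
move=> P_unit [m [m_ge0 ->]]; exists (m *m (invmx P)^T); split.
  by move=> _ [x sx <-]; rewrite dotR_mulmx //; apply: m_ge0.
apply/seteqP; split=> y => [[x [sx mx0] <-]|[[x sx <-]]].
  by split; [exists x | rewrite /= dotR_mulmx].
by rewrite /= dotR_mulmx // => mx0; exists x.
Qed.

Section ConeTransfer.
Variables (R : realType) (n : nat) (I1 I2 : finType).
Variables (u1 : I1 -> 'rV[int]_n) (u2 : I2 -> 'rV[int]_n).
Variables (cones1 : {set {set I1}}) (cones2 : {set {set I2}}).
Variables (f : I1 -> I2) (g : I2 -> I1) (P : 'M[R]_n).
Hypotheses (fK : cancel f g) (gK : cancel g f).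
Hypothesis contained_imset :
  forall A, contained_in_cone cones1 A = contained_in_cone cones2 (f @: A).

Lemma imset_maximal_cone M : maxset (mem cones1) M -> f @: M \in cones2.
Proof.
move=> /maxsetP[M_cone Mmax].
have /exists_inP[T T_cone MT] : contained_in_cone cones2 (f @: M).
  by rewrite -contained_imset; apply/exists_inP; exists M.
have /exists_inP[S S_cone TS] : contained_in_cone cones1 (g @: T).
  by rewrite contained_imset imsetK //; apply/exists_inP; exists T.
have MS : M \subset S.
  by rewrite -(imsetK M fK); apply: fintype.subset_trans TS; apply: imsetS.
have TM : T \subset f @: M.
  by rewrite -(imsetK T gK) -(Mmax S S_cone MS); apply: imsetS.
by rewrite (_ : f @: M = T) //; apply/eqP; rewrite finset.eqEsubset MT TM.
Qed.

Hypotheses (fan1 : is_complete_fan R u1 cones1) (fan2 : is_complete_fan R u2 cones2).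
Hypotheses (P_unit : P \in unitmx) (u1P : forall i, intv R (u1 i) *m P = intv R (u2 (f i))).

Lemma cone_of_mulmx S :
  S \in cones1 -> cone_of u2 cones2 ((fun x => x *m P) @` coneR R u1 S).
Proof.
move=> S_cone; have [M Mmax SM] := @maxset_exists _ (mem cones1) S S_cone.
have := is_face_mulmx P_unit (complete_fan_face_subset fan1 S_cone (maxsetp Mmax) SM).
rewrite (coneR_mulmx _ (w := u2 \o f)) //.
rewrite (coneR_imset _ _ _ fK gK).
exact: complete_fan_face fan2 _ _ (imset_maximal_cone Mmax).
Qed.

End ConeTransfer.

Lemma cone_of_mulmxE (R : realType) n (I1 I2 : finType)
    (u1 : I1 -> 'rV[int]_n) (u2 : I2 -> 'rV[int]_n)
    (cones1 : {set {set I1}}) (cones2 : {set {set I2}})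
    (f : I1 -> I2) (g : I2 -> I1) (P : 'M[R]_n) :
  is_complete_fan R u1 cones1 -> is_complete_fan R u2 cones2 ->
  cancel f g -> cancel g f ->
  (forall A, contained_in_cone cones1 A = contained_in_cone cones2 (f @: A)) ->
  P \in unitmx -> (forall i, intv R (u1 i) *m P = intv R (u2 (f i))) ->
  forall C, cone_of u1 cones1 C <-> cone_of u2 cones2 ((fun x => x *m P) @` C).
Proof.
move=> fan1 fan2 fK gK containedE P_unit u1P C; split=> [[S S_cone ->]|[T T_cone CP]].
  exact: cone_of_mulmx.
have containedE' A : contained_in_cone cones2 A = contained_in_cone cones1 (g @: A).
  by rewrite containedE imsetK.
have Pinv_unit : invmx P \in unitmx by rewrite unitmx_inv.
have u2Pinv j : intv R (u2 j) *m invmx P = intv R (u1 (g j)).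
  by rewrite -{1}(gK j) -u1P mulmxK.
have := cone_of_mulmx gK fK containedE' fan2 fan1 Pinv_unit u2Pinv T_cone.
rewrite -CP image_comp (eq_imagel (f' := id)) ?image_id // => x _ /=.
exact: mulmxK.
Qed.

Lemma intv_sum (K : nzRingType) n (J : finType) (w : J -> 'rV[int]_n) (a : J -> int) :
  intv K (\sum_j a j *: w j) = \sum_j (a j)%:~R *: intv K (w j).
Proof. by rewrite /intv map_mx_sum; apply: eq_bigr => j _; rewrite map_mxZ. Qed.

Lemma intv_eq0 n (v : 'rV[int]_n) : (intv rat v == 0) = (v == 0).
Proof.
apply/eqP/eqP => [/matrixP v0|->]; last by apply/matrixP => i j; rewrite !mxE.
by apply/matrixP => i j; have /eqP := v0 i j; rewrite !mxE intr_eq0 => /eqP.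
Qed.

Lemma map_intv (F : numFieldType) n (v : 'rV[int]_n) :
  map_mx (@ratr F) (intv rat v) = intv F v.
Proof. by apply/matrixP => i j; rewrite !mxE ratr_int. Qed.

Lemma clear_denominators (J : finType) (b : J -> rat) :
  exists2 d : int, d != 0 & exists a : J -> int, forall n (w : J -> 'rV[int]_n),
    d%:~R *: \sum_j b j *: intv rat (w j) = intv rat (\sum_j a j *: w j).
Proof.
exists (\prod_j denq (b j)); first by apply/prodf_neq0 => j _; apply: denq_neq0.
exists (fun j => numq (b j) * \prod_(k | k != j) denq (b k)) => n w.
rewrite intv_sum scaler_sumr; apply: eq_bigr => j _.
by rewrite scalerA (bigD1 j) //= !intrM numqE mulrC mulrA.
Qed.

Lemma rat_relations_of_int n (J : finType) (w1 w2 : J -> 'rV[int]_n) :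
  (forall a : J -> int, \sum_j a j *: w1 j = 0 -> \sum_j a j *: w2 j = 0) ->
  forall b : J -> rat,
    \sum_j b j *: intv rat (w1 j) = 0 -> \sum_j b j *: intv rat (w2 j) = 0.
Proof.
move=> int_rel b b_rel; have [d d_neq0 [a clear_d]] := clear_denominators b.
have a_rel : \sum_j a j *: w2 j = 0.
  by apply/int_rel/eqP; rewrite -intv_eq0 -clear_d b_rel scaler0.
have : (d%:~R : rat) *: \sum_j b j *: intv rat (w2 j) == 0.
  by rewrite clear_d a_rel intv_eq0.
by rewrite scaler_eq0 intr_eq0 (negbTE d_neq0) => /eqP.
Qed.

Definition gen_mx (K : nzRingType) n (J : finType) (w : J -> 'rV[int]_n) :
  'M[K]_(#|J|, n) := \matrix_k intv K (w (enum_val k)).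

Lemma row_gen_mx (K : nzRingType) n (J : finType) (w : J -> 'rV[int]_n) j :
  row (enum_rank j) (gen_mx K w) = intv K (w j).
Proof. by rewrite rowK enum_rankK. Qed.

Lemma mulmx_gen_mx (K : nzRingType) n (J : finType) (w : J -> 'rV[int]_n)
    (b : 'rV[K]_#|J|) :
  b *m gen_mx K w = \sum_j b 0 (enum_rank j) *: intv K (w j).
Proof.
rewrite mulmx_sum_row (reindex enum_rank); last exact/onW_bij/enum_rank_bij.
by apply: eq_bigr => j _; rewrite row_gen_mx.
Qed.

Lemma row_full_gen_mx (F : numFieldType) n (J : finType) (w : J -> 'rV[int]_n) :
  (forall x : 'rV[F]_n, exists a : J -> F, x = \sum_j a j *: intv F (w j)) ->
  row_full (gen_mx rat w).
Proof.
move=> span; rewrite -(row_full_map (@ratr F)).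
have -> : map_mx (@ratr F) (gen_mx rat w) = gen_mx F w.
  by apply/row_matrixP => k; rewrite -map_row !rowK map_intv.
rewrite -sub1mx; apply/row_subP => i; have [a ->] := span (row i 1%:M).
have -> : \sum_j a j *: intv F (w j) = (\row_k a (enum_val k)) *m gen_mx F w.
  by rewrite mulmx_gen_mx; apply: eq_bigr => j _; rewrite mxE enum_rankK.
exact: submxMl.
Qed.

Lemma factor_row_full (F : fieldType) m n (U1 U2 : 'M[F]_(m, n)) :
  row_full U1 -> (forall w : 'rV_m, w *m U1 = 0 -> w *m U2 = 0) ->
  U1 *m (pinvmx U1 *m U2) = U2.
Proof.
move=> U1_full ker12; set W := U1 *m pinvmx U1 - 1%:M.
have /row_matrixP WU1 : W *m U1 = 0.
  by rewrite mulmxBl -mulmxA mulVpmx // mulmx1 mul1mx subrr.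
have /eqP : W *m U2 = 0.
  by apply/row_matrixP => i; rewrite row_mul row0 ker12 // -row_mul WU1 row0.
by rewrite mulmxBl mul1mx subr_eq0 mulmxA => /eqP.
Qed.

Lemma unitmx_row_full_mul (F : fieldType) m n (A : 'M[F]_(m, n)) (B : 'M[F]_n) :
  row_full (A *m B) -> B \in unitmx.
Proof.
rewrite -row_full_unit -!col_leq_rank => /leq_trans; apply.
exact: mxrankM_maxr.
Qed.

Unset Implicit Arguments.

Theorem proposition5p25 (R : realType) (n : nat) (I1 I2 : finType)
  (u1 : I1 -> 'rV[int]_n) (u2 : I2 -> 'rV[int]_n)
  (cones1 : {set {set I1}}) (cones2 : {set {set I2}}) (Psi : I1 -> I2) :
  is_complete_fan R u1 cones1 -> is_complete_fan R u2 cones2 ->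
  bijective Psi ->
  (forall C : {set I1},
      primitive_collection cones1 C <-> primitive_collection cones2 (Psi @: C)) ->
  (forall a : I1 -> int,
      \sum_i a i *: u1 i = 0 <-> \sum_i a i *: u2 (Psi i) = 0) ->
  exists Phi : 'M[rat]_n,
    Phi \in unitmx /\
    (forall i, intv rat (u1 i) *m Phi = intv rat (u2 (Psi i))) /\
    (forall C : set 'rV[R]_n,
       cone_of u1 cones1 C <->
       cone_of u2 cones2 (image C (fun x => x *m map_mx (@ratr R) Phi))) /\
    (forall b : I1 -> rat,
       (\sum_i b i *: intv rat (u1 i)) *m Phi = \sum_i b i *: intv rat (u2 (Psi i))) /\
    (forall b : I1 -> rat,
       \sum_i b i *: intv rat (u1 i) = 0 <-> \sum_i b i *: intv rat (u2 (Psi i)) = 0).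
Proof.
move=> fan1 fan2 [Psi_inv PsiK Psi_invK] primE relE.
pose U1 := gen_mx rat u1; pose U2 := gen_mx rat (u2 \o Psi).
have U1_full : row_full U1.
  by apply: (row_full_gen_mx (F := R)); apply: complete_fan_span fan1.
have U2_full : row_full U2.
  apply: (row_full_gen_mx (F := R)) => x; have [a ->] := complete_fan_span fan2 x.
  by exists (a \o Psi); rewrite (reindex Psi) //; apply/onW_bij; exists Psi_inv.
have [Phi U1Phi] : exists Phi, U1 *m Phi = U2.
  exists (pinvmx U1 *m U2); apply: factor_row_full => // b; rewrite !mulmx_gen_mx.
  by apply: rat_relations_of_int => a /relE.
have Phi_unit : Phi \in unitmx by apply: (@unitmx_row_full_mul _ _ _ U1); rewrite U1Phi.
have u1Phi i : intv rat (u1 i) *m Phi = intv rat (u2 (Psi i)).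
  by rewrite -(row_gen_mx rat u1) -row_mul U1Phi row_gen_mx.
have combPhi b :
    (\sum_i b i *: intv rat (u1 i)) *m Phi = \sum_i b i *: intv rat (u2 (Psi i)).
  by rewrite mulmx_suml; apply: eq_bigr => i _; rewrite -scalemxAl u1Phi.
exists Phi; split=> //; split=> //; split; last split=> // b.
  apply: (cone_of_mulmxE fan1 fan2 PsiK Psi_invK).
  - exact: contained_in_cone_imset PsiK Psi_invK primE.
  - by rewrite map_unitmx.
  - by move=> i; rewrite -map_intv -map_mxM u1Phi map_intv.
rewrite -combPhi; split=> [->|]; first by rewrite mul0mx.
by move/(congr1 (mulmx^~ (invmx Phi))); rewrite mulmxK // mul0mx.
Qed.
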